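(* Let $P\subset\mathbb{R}^d$ be a finite point set satisfying the standing condition, let $\varepsilon\in(0,1)$, let $X$ be the set of extreme points of $P$, let $Q^*_\varepsilon$ be an optimal solution of GRMR (a minimum-cardinality $\varepsilon$-regret set of $P$), and let $Q_\varepsilon$ be the solution returned by the algorithm H-GRMR described in the context. Then $|Q_\varepsilon|\le\frac{|X|}{d+1}\cdot|Q^*_\varepsilon|$.
   Context: For finite $Q\subset\mathbb{R}^d$ and unit $x$, $\omega(x,Q)=\max_{p\in Q}\langle p,x\rangle$. Standing condition: $\omega(x,P)>0$ for all $x\in\mathbb{S}^{d-1}$. Regret ratio $l_x(Q)=1-\omega(x,Q)/\omega(x,P)$; $l(Q)=\max_{x\in\mathbb{S}^{d-1}}l_x(Q)$; $Q\subseteq P$ is an $\varepsilon$-regret set if $l(Q)\le\varepsilon$; GRMR asks for a minimum-cardinality $\varepsilon$-regret set. Voronoi cell $R(p)=\{x\ne0:\langle p,x\rangle\ge\omega(x,P)\}$; extreme points $X=\{t_1,\dots,t_m\}$ are the points with $R(p)\ne\varnothing$. The inner-product Delaunay graph $\mathcal{G}(P)$ is the undirected graph on $X$ with an edge $\{t_i,t_j\}$ iff $R(t_i)\cap R(t_j)\ne\varnothing$; $N(t)$ denotes the neighbors of $t$. For $t_i,t_j\in X$, $\varepsilon_{ij}$ is the optimal value of the linear program: maximize $1-\langle t_i,x\rangle$ subject to $\langle t_j-t,x\rangle\ge0$ for all $t\in N(t_j)$ and $\langle t_j,x\rangle=1$ (with $\varepsilon_{ij}=+\infty$ if unbounded).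 Algorithm H-GRMR on input $(P,X,\mathcal{G}(P),\varepsilon)$: Step 1: start with a directed graph $H_\varepsilon$ on $X$ with no edges; for each $t_i$, mark $t_i$ visited, enqueue all of $N(t_i)$, and while the queue is nonempty dequeue $t_j$; if $t_j$ is not visited, mark it visited, compute $\varepsilon_{ij}$, and if $\varepsilon_{ij}\le\varepsilon$ add edge $t_i\to t_j$ and enqueue all of $N(t_j)$ (visited marks reset for each $t_i$). Step 2: let $Dom(t_i)=\{t_i\}\cup\{t_j: t_i\to t_j\in H_\varepsilon\}$; set $Q_\varepsilon=\varnothing$, $U=X$; while $U\ne\varnothing$, pick $t^*\in X\setminus Q_\varepsilon$ maximizing $|Dom(t^* )\cap U|$, add $t^*$ to $Q_\varepsilon$ and remove $Dom(t^* )$ from $U$. Return $Q_\varepsilon$. *)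

From HB Require Import structures.
From mathcomp Require Import all_boot all_order all_algebra.
From mathcomp Require Import all_classical all_reals.
From mathcomp Require Import ereal.
Set Implicit Arguments. Unset Strict Implicit. Unset Printing Implicit Defensive.
Import Order.TTheory GRing.Theory Num.Theory.
Local Open Scope ring_scope.
Local Open Scope classical_set_scope.

Section GRMR.
Variables (R : realType) (d n : nat).
(* The point set P = { p i | i < n } (p injective), points are row vectors. *)
Variable p : 'I_n -> 'rV[R]_d.

Definition dot (u v : 'rV[R]_d) : R := \sum_(k < d) u 0 k * v 0 k.

Definition unitv (x : 'rV[R]_d) : Prop := dot x x = 1.

(* omega(x,Q) = max_{q in Q} <q,x>  (convention: 0 if Q is empty) *)
Definition omega (x : 'rV[R]_d) (Q : {set 'I_n}) : R :=
  if [pick i in Q] is Some i0 then \big[Num.max/dot (p i0) x]_(i in Q) dot (p i) x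
  else 0.

Definition standing : Prop := forall x, unitv x -> 0 < omega x [set: 'I_n]%SET.

Definition regret_x (x : 'rV[R]_d) (Q : {set 'I_n}) : R :=
  1 - omega x Q / omega x [set: 'I_n]%SET.

(* l(Q) <= eps, i.e. max over the unit sphere of l_x(Q) is <= eps *)
Definition eps_regret_set (eps : R) (Q : {set 'I_n}) : Prop :=
  forall x, unitv x -> regret_x x Q <= eps.

Definition GRMR_opt (eps : R) (Q : {set 'I_n}) : Prop :=
  eps_regret_set eps Q /\
  forall Q' : {set 'I_n}, eps_regret_set eps Q' -> (#|Q| <= #|Q'|)%N.

Definition voronoi (i : 'I_n) : set 'rV[R]_d :=
  [set x | x != 0 /\ omega x [set: 'I_n]%SET <= dot (p i) x].

Definition extreme : {set 'I_n} := [set i | `[< voronoi i !=set0 >]].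

(* inner-product Delaunay graph on X (simple graph, no loops) *)
Definition adj (i j : 'I_n) : bool :=
  [&& i \in extreme, j \in extreme, i != j &
      `[< (voronoi i `&` voronoi j) !=set0 >]].

Definition nbrs (j : 'I_n) : seq 'I_n := enum [pred k | adj j k].

(* eps_ij: optimal value (sup, in the extended reals) of the LP
   maximize 1 - <t_i,x> s.t. <t_j - t, x> >= 0 for t in N(t_j), <t_j,x> = 1 *)
Definition lp_feasible (j : 'I_n) : set 'rV[R]_d :=
  [set x | (forall k, adj j k -> 0 <= dot (p j - p k) x) /\ dot (p j) x = 1].

Definition eps_ij (i j : 'I_n) : \bar R :=
  ereal_sup [set ((1 - dot (p i) x)%:E) | x in lp_feasible j].

(* Step 1 of H-GRMR: BFS from t_i. State = (visited, queue, out-neighbours in H_eps) *)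
Definition bfs_step (eps : R) (i : 'I_n)
    (st : {set 'I_n} * seq 'I_n * {set 'I_n}) : {set 'I_n} * seq 'I_n * {set 'I_n} :=
  let: (vis, q, E) := st in
  match q with
  | [::] => st
  | j :: q' =>
      if j \in vis then (vis, q', E)
      else if `[< (eps_ij i j <= eps%:E)%E >]
           then (j |: vis, q' ++ nbrs j, j |: E)
           else (j |: vis, q', E)
  end.

Fixpoint bfs (eps : R) (i : 'I_n) (fuel : nat)
    (st : {set 'I_n} * seq 'I_n * {set 'I_n}) : {set 'I_n} * seq 'I_n * {set 'I_n} :=
  match fuel with
  | 0 => st
  | f.+1 => if st.1.2 is [::] then st else bfs eps i f (bfs_step eps i st)
  end.

(* out-neighbours of t_i in H_eps; the fuel n*n+n+1 exceeds the total number of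
   enqueued items, so the BFS runs until its queue is empty *)
Definition Hout (eps : R) (i : 'I_n) : {set 'I_n} :=
  (bfs eps i (n * n + n).+1%N ([set i]%SET, nbrs i, (@finset.set0 _))).2.

Definition Dom (eps : R) (i : 'I_n) : {set 'I_n} := i |: Hout eps i.

(* Step 2 of H-GRMR: greedy covering, arbitrary tie-breaking.
   greedy_run Q U Qf : starting from (Q,U), the loop may terminate with Qf. *)
Inductive greedy_run (eps : R) : {set 'I_n} -> {set 'I_n} -> {set 'I_n} -> Prop :=
| greedy_done Q : greedy_run eps Q (@finset.set0 _) Q
| greedy_step Q U t Qf :
    U != (@finset.set0 _) ->
    t \in extreme :\: Q ->
    (forall t', t' \in extreme :\: Q -> (#|Dom eps t' :&: U| <= #|Dom eps t :&: U|)%N) ->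
    greedy_run eps (t |: Q) (U :\: Dom eps t) Qf ->
    greedy_run eps Q U Qf.

Definition HGRMR_output (eps : R) (Q : {set 'I_n}) : Prop :=
  greedy_run eps (@finset.set0 _) extreme Q.

End GRMR.

From HB Require Import structures.
From mathcomp Require Import all_boot all_order all_algebra.
From mathcomp Require Import all_classical all_reals.
From mathcomp Require Import lra.
Set Implicit Arguments. Unset Strict Implicit. Unset Printing Implicit Defensive.
Import Order.TTheory GRing.Theory Num.Theory.
Local Open Scope ring_scope.

(* H-GRMR only ever selects distinct extreme points, so |Q_eps| <= |X|.
   Conversely, for eps < 1 every eps-regret set has more than d points: for
   at most d points there is a unit direction x with <p, x> <= 0 for all of
   them (solve M x = -1 when their rows are independent, otherwise take a
   kernel vector), and in that direction the regret ratio is at least 1.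
   The ratio |X| / (d + 1) follows from these two counts alone. *)

Lemma mulmx_nonpos_dir (R : numFieldType) m d (M : 'M[R]_(m, d)) :
  (0 < d)%N -> (m <= d)%N ->
  exists2 c : 'cV[R]_d, c != 0 & forall j, (M *m c) j 0 <= 0.
Proof.
move=> d_gt0 le_md.
have [rkM_lt_d | le_d_rkM] := ltnP (\rank M) d.
  have : kermx M^T != 0.
    by rewrite -mxrank_eq0 mxrank_ker mxrank_tr -lt0n subn_gt0.
  case/rowV0Pn => v /sub_kermxP vMT0 v_neq0.
  exists v^T; first by rewrite trmx_eq0.
  by move=> j; rewrite -[M]trmxK -trmx_mul vMT0 !mxE.
have rkM_eq_m : \rank M = m.
  by apply/eqP; rewrite eqn_leq rank_leq_row (leq_trans le_md).
have m_gt0 : (0 < m)%N by rewrite -rkM_eq_m (leq_trans d_gt0).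
have /row_freeP [B MB1] : row_free M by rewrite /row_free rkM_eq_m.
pose c : 'cV[R]_d := B *m const_mx (-1).
have Mc : M *m c = const_mx (-1) by rewrite mulmxA MB1 mul1mx.
exists c; last by move=> j; rewrite Mc mxE lerN10.
apply: contra_eqN Mc => /eqP ->; rewrite mulmx0.
apply/eqP => /matrixP /(_ (Ordinal m_gt0) 0); rewrite !mxE => /eqP.
by rewrite eq_sym oppr_eq0 oner_eq0.
Qed.

Section RegretSets.
Variables (R : realType) (d n : nat) (p : 'I_n -> 'rV[R]_d).

Lemma dotZr (u v : 'rV[R]_d) (a : R) : dot u (a *: v) = a * dot u v.
Proof. by rewrite /dot mulr_sumr; apply: eq_bigr => k _; rewrite mxE mulrCA. Qed.

Lemma dotZl (u v : 'rV[R]_d) (a : R) : dot (a *: u) v = a * dot u v.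
Proof. by rewrite /dot mulr_sumr; apply: eq_bigr => k _; rewrite mxE mulrA. Qed.

Lemma dot_gt0 (x : 'rV[R]_d) : x != 0 -> 0 < dot x x.
Proof.
move=> x_neq0.
have [l xl_neq0] : exists l, x 0 l != 0.
  apply/existsP; apply: contraNT x_neq0; rewrite negb_exists => /forallP x0.
  by apply/eqP/matrixP => i j; rewrite (ord1 i) mxE; apply/eqP/negbNE/x0.
rewrite /dot (bigD1 l) //=; apply: ltr_pwDl.
  by rewrite -expr2 lt0r sqr_ge0 andbT sqrf_eq0.
by apply: sumr_ge0 => i _; rewrite -expr2 sqr_ge0.
Qed.

Lemma unitv_normalize (x : 'rV[R]_d) :
  x != 0 -> unitv ((Num.sqrt (dot x x))^-1 *: x).
Proof.
move=> x_neq0; have xx_gt0 := dot_gt0 x_neq0.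
rewrite /unitv dotZl dotZr mulrA -expr2 exprVn sqr_sqrtr ?ltW //.
by rewrite mulVf ?lt0r_neq0.
Qed.

Lemma exists_nonpos_dot (Q : {set 'I_n}) :
  (0 < d)%N -> (#|Q| <= d)%N ->
  exists2 x : 'rV[R]_d, unitv x & forall i, i \in Q -> dot (p i) x <= 0.
Proof.
move=> d_gt0 Q_le_d.
pose M : 'M[R]_(#|Q|, d) := \matrix_(j, l) p (enum_val j) 0 l.
have [c c_neq0 Mc_le0] := mulmx_nonpos_dir M d_gt0 Q_le_d.
have cT_neq0 : c^T != 0 by rewrite trmx_eq0.
exists ((Num.sqrt (dot c^T c^T))^-1 *: c^T); first exact: unitv_normalize.
move=> i iQ; rewrite dotZr pmulr_rle0 ?invr_gt0 ?sqrtr_gt0 ?dot_gt0 //.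
have -> : dot (p i) c^T = (M *m c) (enum_rank_in iQ i) 0.
  by rewrite /dot mxE; apply: eq_bigr => l _; rewrite !mxE enum_rankK_in.
exact: Mc_le0.
Qed.

Lemma omega_nonpos (Q : {set 'I_n}) x :
  (forall i, i \in Q -> dot (p i) x <= 0) -> omega p x Q <= 0.
Proof.
move=> Q_le0; rewrite /omega; case: pickP => [i0 i0Q | //].
apply: (big_ind (fun y => y <= 0)); first exact: Q_le0.
  by move=> a b a_le0 b_le0; rewrite ge_max a_le0 b_le0.
exact: Q_le0.
Qed.

Lemma eps_regret_card_gt (eps : R) (Q : {set 'I_n}) :
  (0 < d)%N -> standing p -> eps < 1 -> eps_regret_set p eps Q -> (d < #|Q|)%N.
Proof.
move=> d_gt0 P_gt0 eps_lt1 Q_regret; rewrite ltnNge; apply/negP => Q_le_d.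
have [x x_unit Qx_le0] := exists_nonpos_dot d_gt0 Q_le_d.
have omegaQ_le0 := omega_nonpos Qx_le0.
have omegaP_gt0 := P_gt0 x x_unit.
have ratio_le0 : omega p x Q / omega p x [set: 'I_n]%SET <= 0.
  by rewrite mulr_le0_ge0 // ltW // invr_gt0.
have := Q_regret x x_unit; rewrite /regret_x; lra.
Qed.

Lemma greedy_run_sub_extreme (eps : R) Q U Qf :
  greedy_run p eps Q U Qf -> Q \subset extreme p -> Qf \subset extreme p.
Proof.
elim=> // {}Q {}U t {}Qf _ /finset.setDP [tX _] _ _ IH QX; apply: IH.
by rewrite finset.subUset finset.sub1set tX QX.
Qed.

Lemma HGRMR_output_card_le (eps : R) Q :
  HGRMR_output p eps Q -> (#|Q| <= #|extreme p|)%N.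
Proof.
by move=> Q_out; apply/subset_leq_card/(greedy_run_sub_extreme Q_out)/finset.sub0set.
Qed.

End RegretSets.

Lemma extreme_rV0 (R : realType) n (p : 'I_n -> 'rV[R]_0) :
  extreme p = finset.set0.
Proof.
apply/finset.setP => i; rewrite !finset.inE.
by apply/negbTE/negP => /asboolP [x [+ _]]; rewrite (thinmx0 x) eqxx.
Qed.

Theorem theorem5 (R : realType) (d n : nat) (p : 'I_n -> 'rV[R]_d) (eps : R)
    (Qstar Qeps : {set 'I_n}) :
  injective p ->
  standing p ->
  0 < eps < 1 ->
  GRMR_opt p eps Qstar ->
  HGRMR_output p eps Qeps ->
  (#|Qeps|%:R : R) <= (#|extreme p|%:R / (d + 1)%:R) * #|Qstar|%:R.
Proof.
move=> _ P_gt0 /andP[_ eps_lt1] [Qstar_regret _] Qeps_out.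
have Qeps_le_X := HGRMR_output_card_le Qeps_out.
have [d0 | d_gt0] := posnP d.
  subst d; move: Qeps_le_X; rewrite extreme_rV0 finset.cards0 leqn0.
  by move/eqP ->; rewrite !mul0r.
have Qstar_gt_d := eps_regret_card_gt d_gt0 P_gt0 eps_lt1 Qstar_regret.
have ratio_ge1 : 1 <= #|Qstar|%:R / (d + 1)%:R :> R.
  by rewrite ler_pdivlMr ?ltr0n ?addn1 // mul1r ler_nat.
rewrite -mulrA [_^-1 * _]mulrC -[X in X <= _]mulr1.
by apply: (ler_pM (ler0n _ _) ler01 _ ratio_ge1); rewrite ler_nat.
Qed.
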